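(* Let $\bm{X}\in\mathbb{R}^{n_1\times r}$, $\bm{Y}\in\mathbb{R}^{n_2\times r}$, and let $\bm{X}_\star,\bm{Y}_\star$, $\bm{M}_\star=\bm{X}_\star\bm{Y}_\star^\top$ be as in the context. If $\|\bm{Y}-\bm{Y}_\star\|\le\sigma_1(\bm{Y}_\star)/4$, then \[ \|(\bm{X}\bm{Y}^\top-\bm{M}_\star)\bm{Y}\|_{\mathrm{F}}\le\frac32\sigma_1(\bm{Y}_\star)\Big(\|(\bm{X}-\bm{X}_\star)\bm{Y}^\top\|_{\mathrm{F}}+\|\bm{X}(\bm{Y}-\bm{Y}_\star)^\top\|_{\mathrm{F}}+\|\bm{X}-\bm{X}_\star\|_{\mathrm{F}}\|\bm{Y}-\bm{Y}_\star\|_{\mathrm{F}}\Big). \] Similarly, if $\|\bm{X}-\bm{X}_\star\|\le\sigma_1(\bm{X}_\star)/4$, then \[ \|(\bm{X}\bm{Y}^\top-\bm{M}_\star)^\top\bm{X}\|_{\mathrm{F}}\le\frac32\sigma_1(\bm{X}_\star)\Big(\|(\bm{X}-\bm{X}_\star)\bm{Y}^\top\|_{\mathrm{F}}+\|\bm{X}(\bm{Y}-\bm{Y}_\star)^\top\|_{\mathrm{F}}+\|\bm{X}-\bm{X}_\star\|_{\mathrm{F}}\|\bm{Y}-\bm{Y}_\star\|_{\mathrm{F}}\Big). \]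
   Context: $\bm{M}_\star\in\mathbb{R}^{n_1\times n_2}$ has rank $r$ and compact SVD $\bm{M}_\star=\bm{U}_\star\bm{\Sigma}_\star\bm{V}_\star^\top$; $\bm{X}_\star=\bm{U}_\star\bm{\Sigma}_\star^{1/2}$, $\bm{Y}_\star=\bm{V}_\star\bm{\Sigma}_\star^{1/2}$, so $\bm{M}_\star=\bm{X}_\star\bm{Y}_\star^\top$. $\sigma_1(\cdot)$ is the largest singular value and $\|\cdot\|$ the spectral norm. *)

From HB Require Import structures.
From mathcomp Require Import all_boot all_order all_algebra.
From mathcomp Require Import reals.
Set Implicit Arguments. Unset Strict Implicit. Unset Printing Implicit Defensive.
Import Order.TTheory GRing.Theory Num.Theory.
Local Open Scope ring_scope.

Section Norms.
Variable R : realType.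

Definition frob {m n : nat} (A : 'M[R]_(m, n)) : R :=
  Num.sqrt (\sum_(i < m) \sum_(j < n) A i j ^+ 2).

Definition specnorm {m n : nat} (A : 'M[R]_(m, n)) : R :=
  sup (fun t : R => exists x : 'cV[R]_n, frob x <= 1 /\ t = frob (A *m x)).

Definition sigma1 {m n : nat} (A : 'M[R]_(m, n)) : R :=
  Num.sqrt (sup (fun l : R => eigenvalue (A^T *m A) l)).

End Norms.

(* Since M* = Xs Ys^T, the residual splits as
     X Y^T - M* = (X - Xs) Y^T + X (Y - Ys)^T - (X - Xs) (Y - Ys)^T,
   so D = X Y^T - M* has Frobenius norm at most the bracket E of the
   statement.  Then ||D Y||_F <= ||D||_F ||Y|| and
   ||Y|| <= ||Ys|| + ||Y - Ys|| <= 5/4 sigma1(Ys), because Ys = V diag(sqrt s)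
   with orthonormal columns V has Gram matrix diag s, whose largest eigenvalue
   s_1 bounds ||Ys||^2.  The second claim is the first one for the transpose. *)

From HB Require Import structures.
From mathcomp Require Import all_boot all_order all_algebra.
From mathcomp Require Import classical_sets reals.
From mathcomp Require Import ring lra.
Set Implicit Arguments. Unset Strict Implicit.
Import Order.TTheory GRing.Theory Num.Theory.
Local Open Scope ring_scope.

Section CauchySchwarz.
Variables (R : realDomainType) (I : finType).

Lemma sumr_sqr_ge0 (a : I -> R) : 0 <= \sum_i a i ^+ 2.
Proof. by apply: sumr_ge0 => i _; apply: sqr_ge0. Qed.

Lemma Lagrange_identity (a b : I -> R) :
  \sum_i \sum_j (a i * b j - a j * b i) ^+ 2 =
  ((\sum_i a i ^+ 2) * (\sum_i b i ^+ 2) - (\sum_i a i * b i) ^+ 2) *+ 2.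
Proof.
have prod_sum (f g : I -> R) :
    (\sum_i f i) * (\sum_j g j) = \sum_i \sum_j f i * g j.
  by rewrite mulr_suml; apply: eq_bigr => i _; rewrite mulr_sumr.
have swap : \sum_i \sum_j a i ^+ 2 * b j ^+ 2 = \sum_i \sum_j a j ^+ 2 * b i ^+ 2.
  exact: exchange_big.
rewrite expr2 !prod_sum mulr2n {2}swap.
rewrite -!sumrB -big_split /=; apply: eq_bigr => i _.
rewrite -!sumrB -big_split /=; apply: eq_bigr => j _; ring.
Qed.

Lemma ler_sum_mul_sqr (a b : I -> R) :
  (\sum_i a i * b i) ^+ 2 <= (\sum_i a i ^+ 2) * (\sum_i b i ^+ 2).
Proof.
rewrite -subr_ge0 -(pmulrn_lge0 _ (isT : (0 < 2)%N)) -Lagrange_identity.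
by apply: sumr_ge0 => i _; apply: sumr_sqr_ge0.
Qed.

End CauchySchwarz.

Section L2Norm.
Variables (R : rcfType) (I : finType).

Definition l2norm (a : I -> R) := Num.sqrt (\sum_i a i ^+ 2).

Lemma l2norm_ge0 a : 0 <= l2norm a.
Proof. exact: sqrtr_ge0. Qed.

Lemma sqr_l2norm a : l2norm a ^+ 2 = \sum_i a i ^+ 2.
Proof. by rewrite sqr_sqrtr ?sumr_sqr_ge0. Qed.

Lemma ler_sum_mul_l2norm (a b : I -> R) : \sum_i a i * b i <= l2norm a * l2norm b.
Proof.
rewrite -sqrtrM ?sumr_sqr_ge0 //; apply: le_trans (ler_norm _) _.
by rewrite -sqrtr_sqr ler_wsqrtr ?ler_sum_mul_sqr.
Qed.

Lemma l2normD (a b : I -> R) : l2norm (fun i => a i + b i) <= l2norm a + l2norm b.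
Proof.
rewrite -ler_sqr ?nnegrE ?addr_ge0 ?l2norm_ge0 // !sqr_l2norm.
have -> : \sum_i (a i + b i) ^+ 2 =
    \sum_i a i ^+ 2 + (\sum_i a i * b i) *+ 2 + \sum_i b i ^+ 2.
  by rewrite -sumrMnl -!big_split /=; apply: eq_bigr => i _; ring.
have := ler_sum_mul_l2norm a b; rewrite -!sqr_l2norm; nra.
Qed.

End L2Norm.

Section Frobenius.
Variable R : realType.
Implicit Types m n p : nat.

Lemma frobE m n (A : 'M[R]_(m, n)) :
  frob A = l2norm (fun ij : 'I_m * 'I_n => A ij.1 ij.2).
Proof. by rewrite /frob /l2norm pair_big. Qed.

Lemma frob_cV n (x : 'cV[R]_n) : frob x = l2norm (fun i => x i 0).
Proof. by rewrite /frob /l2norm; under eq_bigr do rewrite big_ord1. Qed.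

Lemma frob_ge0 m n (A : 'M[R]_(m, n)) : 0 <= frob A.
Proof. exact: sqrtr_ge0. Qed.

Lemma sqr_frob m n (A : 'M[R]_(m, n)) : frob A ^+ 2 = \sum_i \sum_j A i j ^+ 2.
Proof. by rewrite frobE sqr_l2norm pair_big. Qed.

Lemma frob_le m n (A : 'M[R]_(m, n)) c : 0 <= c -> frob A ^+ 2 <= c ^+ 2 -> frob A <= c.
Proof. by move=> c0; rewrite ler_sqr ?nnegrE ?frob_ge0. Qed.

Lemma sqr_frob_trace m n (A : 'M[R]_(m, n)) : frob A ^+ 2 = \tr (A^T *m A).
Proof.
rewrite sqr_frob exchange_big; apply: eq_bigr => j _; rewrite !mxE.
by apply: eq_bigr => i _; rewrite !mxE expr2.
Qed.

Lemma sqr_frob_cols m n (A : 'M[R]_(m, n)) : frob A ^+ 2 = \sum_j frob (col j A) ^+ 2.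
Proof.
rewrite sqr_frob exchange_big; apply: eq_bigr => j _; rewrite sqr_frob.
by apply: eq_bigr => i _; rewrite big_ord1 mxE.
Qed.

Lemma frob0 m n : frob (0 : 'M[R]_(m, n)) = 0.
Proof.
by rewrite /frob big1 ?sqrtr0 // => i _; rewrite big1 // => j _; rewrite mxE expr0n.
Qed.

Lemma frobZ m n c (A : 'M[R]_(m, n)) : frob (c *: A) = `|c| * frob A.
Proof.
rewrite /frob -sqrtr_sqr -sqrtrM ?sqr_ge0 // mulr_sumr; congr Num.sqrt.
by apply: eq_bigr => i _; rewrite mulr_sumr; apply: eq_bigr => j _; rewrite mxE exprMn.
Qed.

Lemma frobN m n (A : 'M[R]_(m, n)) : frob (- A) = frob A.
Proof. by rewrite -scaleN1r frobZ normrN normr1 mul1r. Qed.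

Lemma frobD m n (A B : 'M[R]_(m, n)) : frob (A + B) <= frob A + frob B.
Proof.
rewrite !frobE; apply: le_trans (l2normD _ _); rewrite /l2norm.
by under eq_bigr do rewrite mxE.
Qed.

Lemma frobB m n (A B : 'M[R]_(m, n)) : frob (A - B) <= frob A + frob B.
Proof. by rewrite -(frobN B) frobD. Qed.

Lemma frob_tr m n (A : 'M[R]_(m, n)) : frob A^T = frob A.
Proof.
rewrite /frob exchange_big; congr Num.sqrt.
by apply: eq_bigr => i _; apply: eq_bigr => j _; rewrite mxE.
Qed.

Lemma frobM m n p (A : 'M[R]_(m, n)) (B : 'M[R]_(n, p)) :
  frob (A *m B) <= frob A * frob B.
Proof.
apply: frob_le; first by rewrite mulr_ge0 ?frob_ge0.
rewrite exprMn !sqr_frob [X in _ * X]exchange_big mulr_suml; apply: ler_sum => i _.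
rewrite mulr_sumr; apply: ler_sum => k _; rewrite mxE; exact: ler_sum_mul_sqr.
Qed.

Lemma cV_dot_le_frob n (x y : 'cV[R]_n) : (x^T *m y) 0 0 <= frob x * frob y.
Proof.
rewrite !frob_cV mxE; apply: le_trans (ler_sum_mul_l2norm _ _).
by under eq_bigr do rewrite mxE.
Qed.

End Frobenius.

Section SpectralNorm.
Variable R : realType.
Implicit Types m n p : nat.

Lemma specnorm_has_sup m n (A : 'M[R]_(m, n)) :
  has_sup (fun t : R => exists x : 'cV[R]_n, frob x <= 1 /\ t = frob (A *m x)).
Proof.
split; first by exists 0, 0; rewrite frob0 mulmx0 frob0.
exists (frob A) => _ [x [x1 ->]]; apply: le_trans (frobM _ _) _.
by rewrite ler_piMr ?frob_ge0.
Qed.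

Lemma specnorm_ge0 m n (A : 'M[R]_(m, n)) : 0 <= specnorm A.
Proof.
apply: sup_upper_bound; first exact: specnorm_has_sup.
by exists 0; rewrite frob0 mulmx0 frob0.
Qed.

Lemma frob_mul_specnorm m n (A : 'M[R]_(m, n)) (x : 'cV[R]_n) :
  frob (A *m x) <= specnorm A * frob x.
Proof.
have [x0|xn0] := eqVneq (frob x) 0.
  by rewrite x0 mulr0 -x0 (le_trans (frobM _ _)) // x0 mulr0.
have xpos : 0 < frob x by rewrite lt_def xn0 frob_ge0.
rewrite -ler_pdivrMr // mulrC -[(frob x)^-1]ger0_norm ?invr_ge0 ?frob_ge0 //.
rewrite -frobZ scalemxAr.
apply: sup_upper_bound; first exact: specnorm_has_sup.
exists ((frob x)^-1 *: x); split => //.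
by rewrite frobZ ger0_norm ?invr_ge0 ?frob_ge0 // mulVf.
Qed.

Lemma specnorm_le m n (A : 'M[R]_(m, n)) c : 0 <= c ->
  (forall x : 'cV[R]_n, frob (A *m x) <= c * frob x) -> specnorm A <= c.
Proof.
move=> c0 Ac; apply: ge_sup; first by exists 0, 0; rewrite frob0 mulmx0 frob0.
by move=> _ [x [x1 ->]]; apply: le_trans (Ac x) _; rewrite ler_piMr.
Qed.

Lemma specnormD m n (A B : 'M[R]_(m, n)) : specnorm (A + B) <= specnorm A + specnorm B.
Proof.
apply: specnorm_le => [|x]; first by rewrite addr_ge0 ?specnorm_ge0.
rewrite mulmxDl mulrDl; apply: le_trans (frobD _ _) _.
by rewrite lerD ?frob_mul_specnorm.
Qed.

Lemma specnorm_tr_le m n (A : 'M[R]_(m, n)) : specnorm A^T <= specnorm A.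
Proof.
apply: specnorm_le => [|x]; first exact: specnorm_ge0.
set y := A^T *m x.
have y2 : frob y ^+ 2 <= frob x * (specnorm A * frob y).
  rewrite sqr_frob_trace /mxtrace big_ord1 {1}/y trmx_mul trmxK -mulmxA.
  apply: le_trans (cV_dot_le_frob _ _) _.
  by rewrite ler_wpM2l ?frob_ge0 ?frob_mul_specnorm.
have := frob_ge0 y; have := mulr_ge0 (specnorm_ge0 A) (frob_ge0 x); nra.
Qed.

Lemma frob_mulmx_specnorml m n p (A : 'M[R]_(m, n)) (B : 'M[R]_(n, p)) :
  frob (A *m B) <= specnorm A * frob B.
Proof.
apply: frob_le; first by rewrite mulr_ge0 ?specnorm_ge0 ?frob_ge0.
rewrite exprMn !sqr_frob_cols mulr_sumr; apply: ler_sum => j _.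
rewrite colEsub -mulmx_colsub -colEsub -exprMn.
by rewrite ler_sqr ?nnegrE ?mulr_ge0 ?specnorm_ge0 ?frob_ge0 ?frob_mul_specnorm.
Qed.

Lemma frob_mulmx_specnormr m n p (A : 'M[R]_(m, n)) (B : 'M[R]_(n, p)) :
  frob (A *m B) <= frob A * specnorm B.
Proof.
rewrite -frob_tr trmx_mul mulrC -(frob_tr A).
apply: le_trans (frob_mulmx_specnorml _ _) _.
by rewrite ler_wpM2r ?frob_ge0 ?specnorm_tr_le.
Qed.

Lemma specnorm_le_frob m n (A : 'M[R]_(m, n)) : specnorm A <= frob A.
Proof. exact: specnorm_le (frob_ge0 A) (frobM A). Qed.

End SpectralNorm.

Lemma gram_orthonormal_mul (R : comPzRingType) n r p
    (W : 'M[R]_(n, r)) (B : 'M[R]_(r, p)) :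
  W^T *m W = 1%:M -> (W *m B)^T *m (W *m B) = B^T *m B.
Proof. by move=> hW; rewrite trmx_mul -mulmxA (mulmxA W^T) hW mul1mx. Qed.

Lemma eigenvalue_diag_mxP (F : fieldType) n (d : 'rV[F]_n) l :
  reflect (exists j, l = d 0 j) (eigenvalue (diag_mx d) l).
Proof.
have vdE (v : 'rV[F]_n) j : (v *m diag_mx d) 0 j = v 0 j * d 0 j.
  by rewrite mul_mx_diag mxE.
apply: (iffP eigenvalueP) => [[v vdl vn0] | [j ->]].
  have [j vj0] : exists j, v 0 j != 0.
    apply/existsP; apply: contraNT vn0 => /existsPn v0.
    by apply/eqP/matrixP => i j; rewrite ord1 mxE; apply/eqP/negPn.
  exists j; apply: (mulfI vj0).
  have := congr1 (fun u : 'rV_n => u 0 j) vdl.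
  by rewrite /= vdE mxE => ->; exact: mulrC.
exists (delta_mx 0 j).
  apply/matrixP => i k; rewrite ord1 vdE !mxE.
  by have [->|] := eqVneq k j; rewrite ?mul1r ?mulr1 ?andbF ?mul0r ?mulr0.
by apply/eqP => /matrixP/(_ 0 j); rewrite !mxE !eqxx; apply/eqP/oner_neq0.
Qed.

Section OrthonormalFactor.
Variable R : realType.

Lemma mulmx_diag_sqrt n (s : 'rV[R]_n) : (forall i, 0 <= s 0 i) ->
  diag_mx (map_mx Num.sqrt s) *m diag_mx (map_mx Num.sqrt s) = diag_mx s.
Proof.
move=> s0; apply/matrixP => i j; rewrite mul_diag_mx !mxE.
by case: eqP => _; rewrite ?mulr1n ?mulr0n ?mulr0 // -expr2 sqr_sqrtr.
Qed.

Lemma frob_orthonormal_mul n r p (W : 'M[R]_(n, r)) (B : 'M[R]_(r, p)) :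
  W^T *m W = 1%:M -> frob (W *m B) = frob B.
Proof.
move=> hW; apply/eqP; rewrite -(eqrXn2 (isT : (0 < 2)%N)) ?frob_ge0 //.
by rewrite !sqr_frob_trace gram_orthonormal_mul.
Qed.

Lemma specnorm_orthonormal_mul_le n r p (W : 'M[R]_(n, r)) (B : 'M[R]_(r, p)) :
  W^T *m W = 1%:M -> specnorm (W *m B) <= specnorm B.
Proof.
move=> hW; apply: specnorm_le => [|x]; first exact: specnorm_ge0.
by rewrite -mulmxA frob_orthonormal_mul // frob_mul_specnorm.
Qed.

Lemma specnorm_diag_mx_le n (a : 'rV[R]_n) c : 0 <= c ->
  (forall j, `|a 0 j| <= c) -> specnorm (diag_mx a) <= c.
Proof.
move=> c0 ac; apply: specnorm_le => // x.
apply: frob_le; first by rewrite mulr_ge0 ?frob_ge0.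
rewrite exprMn !sqr_frob mulr_sumr; apply: ler_sum => i _.
rewrite mulr_sumr; apply: ler_sum => k _; rewrite mul_diag_mx mxE exprMn.
by rewrite ler_wpM2r ?sqr_ge0 // -real_normK ?num_real // lerXn2r ?nnegrE.
Qed.

Lemma sigma1_orthonormal_diag n r (W : 'M[R]_(n, r.+1)) (s : 'rV[R]_r.+1) :
  W^T *m W = 1%:M -> (forall i, 0 <= s 0 i) -> (forall i, s 0 i <= s 0 0) ->
  sigma1 (W *m diag_mx (map_mx Num.sqrt s)) = Num.sqrt (s 0 0).
Proof.
move=> hW s0 smax; rewrite /sigma1 gram_orthonormal_mul // tr_diag_mx mulmx_diag_sqrt //.
have eigen_le l : eigenvalue (diag_mx s) l -> l <= s 0 0.
  by move=> /eigenvalue_diag_mxP [j ->].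
have eigen0 : eigenvalue (diag_mx s) (s 0 0) by apply/eigenvalue_diag_mxP; exists 0.
congr Num.sqrt; apply/le_anti/andP; split.
  by apply: ge_sup; [exists (s 0 0) | move=> l /eigen_le].
by apply: sup_upper_bound => //; split; [exists (s 0 0) | exists (s 0 0) => l /eigen_le].
Qed.

Lemma specnorm_le_sigma1_orthonormal_diag n r (W : 'M[R]_(n, r)) (s : 'rV[R]_r) :
  W^T *m W = 1%:M -> (forall i, 0 <= s 0 i) ->
  (forall i j : 'I_r, (i <= j)%N -> s 0 j <= s 0 i) ->
  specnorm (W *m diag_mx (map_mx Num.sqrt s))
    <= sigma1 (W *m diag_mx (map_mx Num.sqrt s)).
Proof.
case: r W s => [|r] W s hW s0 s_sorted.
  apply: le_trans (specnorm_le_frob _) _.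
  by rewrite /frob big1 ?sqrtr0 ?sqrtr_ge0 // => i _; rewrite big_ord0.
rewrite sigma1_orthonormal_diag // => [|i]; last exact: s_sorted.
apply: le_trans (specnorm_orthonormal_mul_le _ hW) _.
apply: specnorm_diag_mx_le => [|j]; first exact: sqrtr_ge0.
by rewrite mxE ger0_norm ?sqrtr_ge0 // ler_wsqrtr ?s_sorted.
Qed.

End OrthonormalFactor.

Section Perturbation.
Variable R : realType.

Lemma frob_factor_sub_le n1 n2 r (X Xs : 'M[R]_(n1, r)) (Y Ys : 'M[R]_(n2, r)) :
  frob (X *m Y^T - Xs *m Ys^T) <=
  frob ((X - Xs) *m Y^T) + frob (X *m (Y - Ys)^T) + frob (X - Xs) * frob (Y - Ys).
Proof.
have -> : X *m Y^T - Xs *m Ys^T =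
    (X - Xs) *m Y^T + X *m (Y - Ys)^T - (X - Xs) *m (Y - Ys)^T.
  by rewrite !linearB /= !mulmxBl opprK addrACA subrr add0r addrA subrK.
apply: le_trans (frobB _ _) _; rewrite lerD ?frobD //.
by apply: le_trans (frobM _ _) _; rewrite frob_tr.
Qed.

Lemma frob_mul_perturbed_le n1 n2 r (D : 'M[R]_(n1, n2)) (Y Ys : 'M[R]_(n2, r))
    (sg e : R) :
  specnorm Ys <= sg -> specnorm (Y - Ys) <= sg / 4 -> frob D <= e ->
  frob (D *m Y) <= 3 / 2 * sg * e.
Proof.
move=> Ys_le dY_le De.
have Y_le : specnorm Y <= sg + sg / 4.
  by rewrite -[Y](subrK Ys) (le_trans (specnormD _ _)) // addrC lerD.
have sg0 : 0 <= sg by apply: le_trans Ys_le; exact: specnorm_ge0.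
apply: le_trans (frob_mulmx_specnormr _ _) _.
apply: le_trans (ler_pM (frob_ge0 _) (specnorm_ge0 _) De Y_le) _.
have e0 : 0 <= e by apply: le_trans De; exact: frob_ge0.
nra.
Qed.

End Perturbation.

Unset Implicit Arguments.

Theorem lemma4 (R : realType) (n1 n2 r : nat)
  (Mstar : 'M[R]_(n1, n2)) (U : 'M[R]_(n1, r)) (V : 'M[R]_(n2, r))
  (s : 'rV[R]_r)
  (hU : U^T *m U = 1%:M) (hV : V^T *m V = 1%:M)
  (hs_pos : forall i, 0 < s 0 i)
  (hs_sorted : forall i j : 'I_r, (i <= j)%N -> s 0 j <= s 0 i)
  (hM : Mstar = U *m diag_mx s *m V^T)
  (X : 'M[R]_(n1, r)) (Y : 'M[R]_(n2, r)) :
  let Xs := U *m diag_mx (map_mx Num.sqrt s) in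
  let Ys := V *m diag_mx (map_mx Num.sqrt s) in
  let E := frob ((X - Xs) *m Y^T) + frob (X *m (Y - Ys)^T)
           + frob (X - Xs) * frob (Y - Ys) in
  (specnorm (Y - Ys) <= sigma1 Ys / 4 ->
     frob ((X *m Y^T - Mstar) *m Y) <= 3 / 2 * sigma1 Ys * E) /\
  (specnorm (X - Xs) <= sigma1 Xs / 4 ->
     frob ((X *m Y^T - Mstar)^T *m X) <= 3 / 2 * sigma1 Xs * E).
Proof.
move=> Xs Ys E.
have s0 i : 0 <= s 0 i := ltW (hs_pos i).
have hMs : Mstar = Xs *m Ys^T.
  rewrite hM /Xs /Ys trmx_mul tr_diag_mx [RHS]mulmxA -[in RHS](mulmxA U).
  by rewrite mulmx_diag_sqrt.
have DE : frob (X *m Y^T - Mstar) <= E by rewrite hMs; apply: frob_factor_sub_le.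
split=> [dY | dX].
  exact: frob_mul_perturbed_le (specnorm_le_sigma1_orthonormal_diag hV s0 hs_sorted) dY DE.
apply: frob_mul_perturbed_le (specnorm_le_sigma1_orthonormal_diag hU s0 hs_sorted) dX _.
by rewrite frob_tr.
Qed.
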